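(* Let $k\geqslant 2$ and $m_1,\ldots,m_k\geqslant 2$. Write $S^{m_i}=\{(\mathbf{x}_i,z_i):\mathbf{x}_i\in\mathbb{R}^{m_i-1},\ z_i\in\mathbb{C},\ |\mathbf{x}_i|^2+|z_i|^2=1\}$. Let the torus $T^{k-1}=U(1)^{k-1}$ act on $S^{m_1}\times\cdots\times S^{m_k}$ by \[ (r_1,\ldots,r_{k-1})\cdot((\mathbf{x}_1,z_1),\ldots,(\mathbf{x}_k,z_k))=((\mathbf{x}_1,z_1r_1^{-1}),(\mathbf{x}_2,r_1z_2r_2^{-1}),\ldots,(\mathbf{x}_{k-1},r_{k-2}z_{k-1}r_{k-1}^{-1}),(\mathbf{x}_k,r_{k-1}z_k)). \] Then the orbit space $(S^{m_1}\times\cdots\times S^{m_k})/T^{k-1}$ is homeomorphic to the sphere $S^m$, $m=m_1+\cdots+m_k-(k-1)$, and the canonical projection onto the orbit space is given by \[ ((\mathbf{x}_1,z_1),\ldots,(\mathbf{x}_k,z_k))\mapsto\frac{(\mathbf{x}_1,\ldots,\mathbf{x}_k,z_1z_2\cdots z_k)}{\sqrt{|\mathbf{x}_1|^2+\cdots+|\mathbf{x}_k|^2+|z_1z_2\cdots z_k|^2}}\in S^m\subset\mathbb{R}^{m_1-1}\times\cdots\times\mathbb{R}^{m_k-1}\times\mathbb{C}. \] *)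

From mathcomp Require Import all_boot all_order all_algebra.
From mathcomp Require Import complex reals.
Set Implicit Arguments. Unset Strict Implicit. Unset Printing Implicit Defensive.
Import Order.TTheory GRing.Theory Num.Theory.
Local Open Scope ring_scope.
Local Open Scope complex_scope.

Section Defs.
Variables (R : realType) (k : nat) (m : 'I_k -> nat).

Definition vnorm2 n (x : 'rV[R]_n) : R := \sum_(j < n) x 0 j ^+ 2.
Definition cnorm2 (z : R[i]) : R := complex.Re z ^+ 2 + complex.Im z ^+ 2.

Definition Pt := ((forall i : 'I_k, 'rV[R]_(m i - 1)) * ('I_k -> R[i]))%type.
Definition Tgt := ((forall i : 'I_k, 'rV[R]_(m i - 1)) * R[i])%type.

Definition InDom (p : Pt) : Prop :=
  forall i : 'I_k, vnorm2 (p.1 i) + cnorm2 (p.2 i) = 1.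
Definition InSm (q : Tgt) : Prop :=
  \sum_(i < k) vnorm2 (q.1 i) + cnorm2 q.2 = 1.

(* squared Euclidean distances *)
Definition distP (p q : Pt) : R :=
  \sum_(i < k) (vnorm2 (p.1 i - q.1 i) + cnorm2 (p.2 i - q.2 i)).
Definition distT (p q : Tgt) : R :=
  \sum_(i < k) vnorm2 (p.1 i - q.1 i) + cnorm2 (p.2 - q.2).

(* torus T^{k-1} = U(1)^{k-1}: r_1, ..., r_{k-1} stored as r : 'I_(k-1) -> C *)
Definition InTorus (r : 'I_k.-1 -> R[i]) : Prop := forall j, cnorm2 (r j) = 1.
(* r_j (1-based), with the convention r_0 = r_k = 1 *)
Definition rext (r : 'I_k.-1 -> R[i]) (j : nat) : R[i] :=
  if (0 < j)%N then (if insub j.-1 is Some o then r o else 1) else 1.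
(* factor i (0-based, i.e. factor i+1 of the paper):  z_{i+1} |-> r_i z_{i+1} r_{i+1}^{-1} *)
Definition act (r : 'I_k.-1 -> R[i]) (p : Pt) : Pt :=
  (p.1, fun i : 'I_k => rext r i * p.2 i * (rext r i.+1)^-1).

Definition proj (p : Pt) : Tgt :=
  let w := \prod_(i < k) p.2 i in
  let s := Num.sqrt (\sum_(i < k) vnorm2 (p.1 i) + cnorm2 w) in
  (fun i => s^-1 *: p.1 i, w * (s^-1)%:C).

End Defs.

Definition rel_open (R : realType) (T : Type) (d : T -> T -> R)
  (S U : T -> Prop) : Prop :=
  forall x, S x -> U x ->
    exists2 e : R, 0 < e & forall y, S y -> d x y < e -> U y.

Definition rel_continuous (R : realType) (T T' : Type) (d : T -> T -> R)
  (d' : T' -> T' -> R) (S : T -> Prop) (f : T -> T') : Prop :=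
  forall x, S x -> forall e : R, 0 < e ->
    exists2 del : R, 0 < del & forall y, S y -> d x y < del -> d' (f x) (f y) < e.

(* On the product of spheres the unnormalised image v(p) = (x_1, ..., x_k, z_1 ... z_k)
   satisfies |v(p)|^2 = sum |x_i|^2 + prod (1 - |x_i|^2) >= 1, so normalising it is
   1-Lipschitz there and proj is Lipschitz.  If proj p = proj p', then v(p) = c v(p') with
   prod (1 - c^2 |x'_i|^2) = c^2 prod (1 - |x'_i|^2), which forces c = 1; hence
   |z_i| = |z'_i| and prod z_i = prod z'_i, and the unimodular ratios z'_i / z_i
   (adjusted at a vanishing z_i) telescope into an element of the torus.  A point (y, w)
   of S^m is the image of a point with x_i = sqrt u y_i, where u solves
   u |w|^2 = prod (1 - u |y_i|^2) by the intermediate value theorem.  Finally the domain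
   is compact, so proj is a closed map and S^m carries the quotient topology. *)

From mathcomp Require Import all_boot all_order all_algebra.
From mathcomp Require Import complex reals ring lra zify.
From mathcomp Require Import all_classical all_analysis.
(* Imported last, so that [proj] is the map of Defs rather than the product projection. *)
From Pilot Require Import Defs.
Import Order.TTheory GRing.Theory Num.Theory.
Import numFieldNormedType.Exports ArrowAsProduct.
Set Implicit Arguments. Unset Strict Implicit. Unset Printing Implicit Defensive.
Local Open Scope ring_scope.
Local Open Scope complex_scope.

Section ComplexNorm.
Variable R : realType.
Implicit Types a b c : R[i].

Lemma cnorm2M a b : cnorm2 (a * b) = cnorm2 a * cnorm2 b.
Proof. by case: a b => a1 a2 [b1 b2]; rewrite /cnorm2 /=; ring. Qed.

Lemma cnorm2_ge0 a : 0 <= cnorm2 a.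
Proof. by rewrite /cnorm2 addr_ge0 ?sqr_ge0. Qed.

Lemma cnorm2_eq0 a : (cnorm2 a == 0) = (a == 0).
Proof.
case: a => a1 a2; rewrite /cnorm2 /= paddr_eq0 ?sqr_ge0 // !sqrf_eq0.
by rewrite eq_complex.
Qed.

Lemma cnorm2_neq0 a : cnorm2 a = 1 -> a != 0.
Proof. by move=> h; rewrite -cnorm2_eq0 h oner_neq0. Qed.

Lemma cnorm2_real (x : R) : cnorm2 x%:C = x ^+ 2.
Proof. by rewrite /cnorm2 /= expr0n addr0. Qed.

Lemma cnorm21 : cnorm2 (1 : R[i]) = 1.
Proof. by rewrite cnorm2_real expr1n. Qed.

Lemma cnorm2N a : cnorm2 (- a) = cnorm2 a.
Proof. by case: a => a1 a2; rewrite /cnorm2 /=; ring. Qed.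

Lemma cnorm2V a : cnorm2 a^-1 = (cnorm2 a)^-1.
Proof.
have [->|a0] := eqVneq a 0; first by rewrite invr0 cnorm2_real expr0n invr0.
apply: (mulfI (_ : cnorm2 a != 0)); first by rewrite cnorm2_eq0.
by rewrite -cnorm2M !divff ?cnorm2_eq0 // cnorm21.
Qed.

Lemma cnorm2MC a (x : R) : cnorm2 (a * x%:C) = x ^+ 2 * cnorm2 a.
Proof. by rewrite cnorm2M cnorm2_real mulrC. Qed.

Lemma cnorm2_prod (I : Type) (r : seq I) (P : pred I) (F : I -> R[i]) :
  cnorm2 (\prod_(i <- r | P i) F i) = \prod_(i <- r | P i) cnorm2 (F i).
Proof. by elim/big_rec2: _ => [|i x y _ <-]; rewrite ?cnorm21 ?cnorm2M. Qed.

Lemma cnorm2D_le a b : cnorm2 (a + b) <= 2 * cnorm2 a + 2 * cnorm2 b.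
Proof.
case: a b => a1 a2 [b1 b2]; rewrite /cnorm2 /=.
by have := sqr_ge0 (a1 - b1); have := sqr_ge0 (a2 - b2); nra.
Qed.

Lemma cnorm2B_sym a b : cnorm2 (a - b) = cnorm2 (b - a).
Proof. by rewrite -opprB cnorm2N. Qed.

Lemma cnorm2B_le a b c : cnorm2 (a - c) <= 2 * cnorm2 (a - b) + 2 * cnorm2 (b - c).
Proof. by have := cnorm2D_le (a - b) (b - c); rewrite addrA subrK. Qed.

Definition cdot a b : R := complex.Re a * complex.Re b + complex.Im a * complex.Im b.

Lemma cnorm2B a b : cnorm2 (a - b) = cnorm2 a + cnorm2 b - 2 * cdot a b.
Proof. by case: a b => a1 a2 [b1 b2]; rewrite /cnorm2 /cdot /=; ring. Qed.

Lemma cdotMC a b (x y : R) : cdot (a * x%:C) (b * y%:C) = x * y * cdot a b.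
Proof. by case: a b => a1 a2 [b1 b2]; rewrite /cdot /=; ring. Qed.

(* Induction on [a A - b B = (a - b) A + b (A - B)], all factors having modulus at most 1. *)
Lemma cnorm2_prodB_le (I : Type) (r : seq I) (F G : I -> R[i]) :
  (forall i, cnorm2 (F i) <= 1) -> (forall i, cnorm2 (G i) <= 1) ->
  cnorm2 (\prod_(i <- r) F i - \prod_(i <- r) G i) <=
    2 ^+ size r * \sum_(i <- r) cnorm2 (F i - G i).
Proof.
move=> F1 G1; elim: r => [|x r IH]; first by rewrite !big_nil subrr cnorm2_real expr0n mulr0.
rewrite !big_cons /= exprS.
set A := \prod_(i <- r) F i; set B := \prod_(i <- r) G i.
set S := \sum_(i <- r) _ in IH *; set P := 2 ^+ size r in IH *.
have -> : F x * A - G x * B = (F x - G x) * A + G x * (A - B) by ring.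
have A1 : cnorm2 A <= 1.
  by rewrite /A cnorm2_prod prodr_ile1 // => i _; rewrite cnorm2_ge0 F1.
have P1 : 1 <= P by rewrite exprn_ege1 // ler1n.
have S0 : 0 <= S by rewrite sumr_ge0 // => i _; apply: cnorm2_ge0.
apply: le_trans (cnorm2D_le _ _) _; rewrite !cnorm2M.
have := G1 x; have := cnorm2_ge0 (F x - G x); have := cnorm2_ge0 (A - B).
have := cnorm2_ge0 A; have := cnorm2_ge0 (G x); nra.
Qed.

End ComplexNorm.

Section RowNorm.
Variable R : realType.

Definition vdot n (x y : 'rV[R]_n) : R := \sum_(j < n) x 0 j * y 0 j.

Lemma vnorm2_ge0 n (x : 'rV[R]_n) : 0 <= vnorm2 x.
Proof. by rewrite sumr_ge0 // => j _; apply: sqr_ge0. Qed.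

Lemma vnorm2_eq0 n (x : 'rV[R]_n) : vnorm2 x = 0 -> x = 0.
Proof.
move=> /psumr_eq0P x0; apply/matrixP => i j; rewrite (ord1 i) mxE.
by apply/eqP; rewrite -sqrf_eq0 x0 // => l _; apply: sqr_ge0.
Qed.

Lemma vnorm2Z n (c : R) (x : 'rV[R]_n) : vnorm2 (c *: x) = c ^+ 2 * vnorm2 x.
Proof. by rewrite /vnorm2 mulr_sumr; apply: eq_bigr => j _; rewrite mxE exprMn. Qed.

Lemma vdotZ n (a b : R) (x y : 'rV[R]_n) : vdot (a *: x) (b *: y) = a * b * vdot x y.
Proof. by rewrite /vdot mulr_sumr; apply: eq_bigr => j _; rewrite !mxE; ring. Qed.

Lemma vnorm2B n (x y : 'rV[R]_n) : vnorm2 (x - y) = vnorm2 x + vnorm2 y - 2 * vdot x y.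
Proof.
rewrite /vnorm2 /vdot mulr_sumr -big_split -sumrB /=.
by apply: eq_bigr => j _; rewrite !mxE; ring.
Qed.

Lemma vnorm2B_sym n (x y : 'rV[R]_n) : vnorm2 (x - y) = vnorm2 (y - x).
Proof. by apply: eq_bigr => j _; rewrite !mxE; ring. Qed.

Lemma vnorm2B_le n (x y z : 'rV[R]_n) :
  vnorm2 (x - z) <= 2 * vnorm2 (x - y) + 2 * vnorm2 (y - z).
Proof.
rewrite /vnorm2 !mulr_sumr -big_split; apply: ler_sum => j _; rewrite !mxE /=.
by have := sqr_ge0 (x 0 j - 2 * y 0 j + z 0 j); nra.
Qed.

End RowNorm.
Arguments vdot {R n}.

Section RealInequalities.
Variable R : realType.

Lemma sub1_sum_le_prod (I : Type) (r : seq I) (a : I -> R) :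
  (forall i, 0 <= a i <= 1) -> 1 - \sum_(i <- r) a i <= \prod_(i <- r) (1 - a i).
Proof.
move=> a01; elim: r => [|x r IH]; first by rewrite !big_nil subr0.
rewrite !big_cons; have /andP[? ?] := a01 x.
have : 0 <= \sum_(i <- r) a i by rewrite sumr_ge0 // => i _; case/andP: (a01 i).
move: IH; set S := \sum_(i <- r) _; set P := \prod_(i <- r) _; nra.
Qed.

(* If [c < 1] then each factor [1 - c^2 a_i] is at least [1 - a_i], so the identity fails. *)
Lemma scale_ge1_of_prod_eq (I : eqType) (r : seq I) (a : I -> R) (c : R) : 0 < c ->
  (forall i, 0 <= a i <= 1) -> (forall i, c ^+ 2 * a i <= 1) ->
  \prod_(i <- r) (1 - c ^+ 2 * a i) = c ^+ 2 * \prod_(i <- r) (1 - a i) -> 1 <= c.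
Proof.
move=> c0 a01 ca1 E; rewrite leNgt; apply/negP => c1.
have c2 : c ^+ 2 < 1 by nra.
have P0 : 0 <= \prod_(i <- r) (1 - a i).
  by rewrite prodr_ge0 // => i _; have /andP[? ?] := a01 i; lra.
have [Pp|Pz] := ltrP 0 (\prod_(i <- r) (1 - a i)).
  have : \prod_(i <- r) (1 - a i) <= \prod_(i <- r) (1 - c ^+ 2 * a i).
    by apply: ler_prod => i _; have /andP[? ?] := a01 i; apply/andP; split; nra.
  nra.
have : \prod_(i <- r) (1 - c ^+ 2 * a i) == 0.
  by rewrite E (_ : \prod_(i <- r) _ = 0) ?mulr0 //; apply/le_anti/andP.
by rewrite prodf_seq_eq0 => /hasP[i _ /= /eqP]; have /andP[? ?] := a01 i; nra.
Qed.

(* Radial projection onto the unit sphere does not increase distances outside the unit ball;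
   here [s, s'] are the norms of two vectors and [d] their scalar product. *)
Lemma normalize_dist2_le (s s' d : R) : 1 <= s -> 1 <= s' ->
  0 <= s ^+ 2 + s' ^+ 2 - 2 * d ->
  s^-1 ^+ 2 * s ^+ 2 + s'^-1 ^+ 2 * s' ^+ 2 - 2 * (s^-1 * s'^-1 * d)
    <= s ^+ 2 + s' ^+ 2 - 2 * d.
Proof.
move=> s1 s1' D0.
have s0 : s != 0 by rewrite gt_eqF // (lt_le_trans ltr01).
have s0' : s' != 0 by rewrite gt_eqF // (lt_le_trans ltr01).
have ss0 : 0 < s * s' by rewrite mulr_gt0 // (lt_le_trans ltr01).
rewrite -!exprMn !mulVf // !expr1n -invfM -(ler_pM2l ss0).
have -> : s * s' * (1 + 1 - 2 * ((s * s')^-1 * d)) = 2 * (s * s') - 2 * d.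
  by field; rewrite s0 s0'.
have := sqr_ge0 (s - s').
have : 0 <= (s * s' - 1) * (s ^+ 2 + s' ^+ 2 - 2 * d) by rewrite mulr_ge0 //; nra.
nra.
Qed.

End RealInequalities.

Section SphereGeometry.
Variables (R : realType) (k : nat) (m : 'I_k -> nat).
Implicit Types (p : Pt R m) (q : Tgt R m).

Definition tnorm2 q : R := \sum_(i < k) vnorm2 (q.1 i) + cnorm2 q.2.
Definition tdot q q' : R := \sum_(i < k) vdot (q.1 i) (q'.1 i) + cdot q.2 q'.2.
Definition tscale (a : R) q : Tgt R m := (fun i => a *: q.1 i, q.2 * a%:C).

Lemma tnorm2_ge0 q : 0 <= tnorm2 q.
Proof. by rewrite addr_ge0 ?cnorm2_ge0 ?sumr_ge0 // => i _; apply: vnorm2_ge0. Qed.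

Lemma tnorm2Z a q : tnorm2 (tscale a q) = a ^+ 2 * tnorm2 q.
Proof.
rewrite /tnorm2 /= cnorm2MC [RHS]mulrDr mulr_sumr.
by congr (_ + _); apply: eq_bigr => i _; rewrite vnorm2Z.
Qed.

Lemma tdotZ a b q q' : tdot (tscale a q) (tscale b q') = a * b * tdot q q'.
Proof.
rewrite /tdot /= cdotMC [RHS]mulrDr mulr_sumr.
by congr (_ + _); apply: eq_bigr => i _; rewrite vdotZ.
Qed.

Lemma distTE q q' : distT q q' = tnorm2 q + tnorm2 q' - 2 * tdot q q'.
Proof.
rewrite /distT /tnorm2 /tdot cnorm2B.
under eq_bigr do rewrite vnorm2B.
by rewrite sumrB big_split -mulr_sumr /=; ring.
Qed.

Lemma distT_ge0 q q' : 0 <= distT q q'.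
Proof. by rewrite addr_ge0 ?cnorm2_ge0 ?sumr_ge0 // => i _; apply: vnorm2_ge0. Qed.

Lemma distT_sym q q' : distT q q' = distT q' q.
Proof.
by rewrite /distT cnorm2B_sym; congr (_ + _); apply: eq_bigr => i _; rewrite vnorm2B_sym.
Qed.

Lemma distT_le q1 q2 q3 : distT q1 q3 <= 2 * distT q1 q2 + 2 * distT q2 q3.
Proof.
rewrite /distT; have := cnorm2B_le q1.2 q2.2 q3.2.
have : \sum_(i < k) vnorm2 (q1.1 i - q3.1 i) <= 2 * \sum_(i < k) vnorm2 (q1.1 i - q2.1 i)
   + 2 * \sum_(i < k) vnorm2 (q2.1 i - q3.1 i).
  by rewrite !mulr_sumr -big_split; apply: ler_sum => i _; apply: vnorm2B_le.
lra.
Qed.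

Lemma distT_eq0 q q' : distT q q' = 0 -> q = q'.
Proof.
rewrite /distT => /eqP; rewrite paddr_eq0 ?cnorm2_ge0 ?sumr_ge0 //; last first.
  by move=> i _; apply: vnorm2_ge0.
move=> /andP[/eqP/psumr_eq0P V0 /eqP C0].
rewrite [q]surjective_pairing [q']surjective_pairing; congr (_, _).
  apply: functional_extensionality_dep => i; apply/eqP; rewrite -subr_eq0.
  by apply/eqP/vnorm2_eq0/V0 => // j _; apply: vnorm2_ge0.
by apply/eqP; rewrite -subr_eq0 -cnorm2_eq0 C0.
Qed.

Lemma InDom_cnorm2 p : InDom p -> forall i, cnorm2 (p.2 i) = 1 - vnorm2 (p.1 i).
Proof. by move=> hp i; rewrite -(hp i) addrC addKr. Qed.

Lemma InDom_vnorm2_le1 p : InDom p -> forall i, 0 <= vnorm2 (p.1 i) <= 1.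
Proof.
by move=> hp i; rewrite vnorm2_ge0 /= -(hp i) lerDl cnorm2_ge0.
Qed.

Lemma InDom_cnorm2_le1 p : InDom p -> forall i, cnorm2 (p.2 i) <= 1.
Proof. by move=> hp i; rewrite -(hp i) lerDr vnorm2_ge0. Qed.

Lemma InDom_cnorm2_prod p : InDom p ->
  cnorm2 (\prod_(i < k) p.2 i) = \prod_(i < k) (1 - vnorm2 (p.1 i)).
Proof. by move=> hp; rewrite cnorm2_prod; apply: eq_bigr => i _; apply: InDom_cnorm2. Qed.

Definition proj_raw p : Tgt R m := (p.1, \prod_(i < k) p.2 i).
Definition proj_norm p : R := Num.sqrt (tnorm2 (proj_raw p)).

Lemma projE p : proj p = tscale (proj_norm p)^-1 (proj_raw p).
Proof. by []. Qed.

Lemma tnorm2_proj_raw p : InDom p ->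
  tnorm2 (proj_raw p) = \sum_(i < k) vnorm2 (p.1 i) + \prod_(i < k) (1 - vnorm2 (p.1 i)).
Proof. by move=> hp; rewrite /tnorm2 InDom_cnorm2_prod. Qed.

Lemma tnorm2_proj_raw_ge1 p : InDom p -> 1 <= tnorm2 (proj_raw p).
Proof.
move=> hp; rewrite tnorm2_proj_raw //.
have := sub1_sum_le_prod (index_enum 'I_k) (InDom_vnorm2_le1 hp); lra.
Qed.

Lemma proj_norm_ge1 p : InDom p -> 1 <= proj_norm p.
Proof. by move=> /tnorm2_proj_raw_ge1 hp; rewrite -sqrtr1 ler_sqrt // (le_trans ler01). Qed.

Lemma proj_norm_neq0 p : InDom p -> proj_norm p != 0.
Proof. by move=> /proj_norm_ge1; apply: contraTneq => ->; rewrite ler10. Qed.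

Lemma sqr_proj_norm p : InDom p -> proj_norm p ^+ 2 = tnorm2 (proj_raw p).
Proof. by move=> hp; rewrite sqr_sqrtr // tnorm2_ge0. Qed.

Lemma proj_InSm p : InDom p -> InSm (proj p).
Proof.
move=> hp; rewrite /InSm -/(tnorm2 _) projE tnorm2Z exprVn sqr_proj_norm //.
by rewrite mulVf // -sqr_proj_norm // sqrf_eq0 proj_norm_neq0.
Qed.

Lemma distT_proj_raw_le p p' : InDom p -> InDom p' ->
  distT (proj_raw p) (proj_raw p') <= 2 ^+ k * distP p p'.
Proof.
move=> hp hp'; rewrite /distT /distP big_split /= mulrDr; apply: lerD.
  have : 1 <= 2 ^+ k :> R by rewrite exprn_ege1 // ler1n.
  have : 0 <= \sum_(i < k) vnorm2 (p.1 i - p'.1 i).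
    by rewrite sumr_ge0 // => i _; apply: vnorm2_ge0.
  nra.
have := cnorm2_prodB_le (index_enum 'I_k) (InDom_cnorm2_le1 hp) (InDom_cnorm2_le1 hp').
by rewrite /index_enum unlock -enumT -cardT card_ord.
Qed.

Lemma distT_proj_le p p' : InDom p -> InDom p' ->
  distT (proj p) (proj p') <= 2 ^+ k * distP p p'.
Proof.
move=> hp hp'; apply: le_trans (distT_proj_raw_le hp hp').
have := distT_ge0 (proj_raw p) (proj_raw p').
rewrite !projE !distTE !tnorm2Z tdotZ -!sqr_proj_norm //.
exact: normalize_dist2_le (proj_norm_ge1 hp) (proj_norm_ge1 hp').
Qed.

Lemma proj_eq_scale p p' : InDom p -> InDom p' -> proj p = proj p' ->
  (forall i, p.1 i = (proj_norm p / proj_norm p') *: p'.1 i) /\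
  \prod_(i < k) p.2 i = \prod_(i < k) p'.2 i * (proj_norm p / proj_norm p')%:C.
Proof.
move=> hp hp'; rewrite !projE /tscale /= => -[E1 E2].
have n0 := proj_norm_neq0 hp; split.
  move=> i; have /(congr1 (fun v => proj_norm p *: v)) := congr1 (fun f => f i) E1.
  by rewrite /= !scalerA mulfV // scale1r mulrC.
have /(congr1 (fun w => w * (proj_norm p)%:C)) := E2.
by rewrite -!mulrA -!rmorphM /= mulVf // mulr1 => ->; rewrite [_^-1 * _]mulrC.
Qed.

Lemma proj_norm_le_of_proj_eq p p' : InDom p -> InDom p' -> proj p = proj p' ->
  proj_norm p' <= proj_norm p.
Proof.
move=> hp hp' E; have [E1 E2] := proj_eq_scale hp hp' E.
set c := proj_norm p / proj_norm p' in E1 E2.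
have n1 := proj_norm_ge1 hp; have n1' := proj_norm_ge1 hp'.
suff : 1 <= c by rewrite ler_pdivlMr ?mul1r // (lt_le_trans ltr01).
have c0 : 0 < c by rewrite divr_gt0 // (lt_le_trans ltr01).
have cv i : c ^+ 2 * vnorm2 (p'.1 i) = vnorm2 (p.1 i) by rewrite E1 vnorm2Z.
apply: (scale_ge1_of_prod_eq (r := index_enum 'I_k) (a := fun i => vnorm2 (p'.1 i)) c0
  (InDom_vnorm2_le1 hp')).
  by move=> i; rewrite cv; case/andP: (InDom_vnorm2_le1 hp i).
rewrite /=; under eq_bigr do rewrite cv.
by rewrite -!InDom_cnorm2_prod // E2 cnorm2MC.
Qed.

Lemma proj_eq_raw p p' : InDom p -> InDom p' -> proj p = proj p' -> proj_raw p = proj_raw p'.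
Proof.
move=> hp hp' E.
have e : proj_norm p = proj_norm p'.
  by apply/le_anti; rewrite !proj_norm_le_of_proj_eq.
have [E1 E2] := proj_eq_scale hp hp' E.
rewrite e mulfV ?proj_norm_neq0 // in E1 E2; rewrite /proj_raw E2 mulr1; congr (_, _).
by apply: functional_extensionality_dep => i; rewrite E1 scale1r.
Qed.

End SphereGeometry.

Section TorusOrbits.
Variable R : realType.

Lemma unimodular_ratio (I : finType) (z z' : I -> R[i]) :
  (forall i, cnorm2 (z i) = cnorm2 (z' i)) -> \prod_i z i = \prod_i z' i ->
  exists u : I -> R[i],
    [/\ forall i, cnorm2 (u i) = 1, \prod_i u i = 1 & forall i, z' i = u i * z i].
Proof.
move=> zz' Ez; pose u0 i := if z i == 0 then 1 else z' i / z i.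
have u0_unit i : cnorm2 (u0 i) = 1.
  rewrite /u0; case: eqP => [_|/eqP z0]; first exact: cnorm21.
  by rewrite cnorm2M cnorm2V -zz' mulfV // cnorm2_eq0.
have z'E i : z' i = u0 i * z i.
  rewrite /u0; case: eqP => [z0|/eqP z0]; last by rewrite divfK.
  by apply/eqP; rewrite z0 mulr0 -cnorm2_eq0 -zz' z0 cnorm2_eq0.
have [j /eqP zj0|nz] := pickP (fun j => z j == 0).
  (* a vanishing coordinate leaves its unit factor free: use it to normalise the product *)
  pose P := \prod_i u0 i.
  have P0 : P != 0 by apply/prodf_neq0 => i _; apply: cnorm2_neq0.
  exists (fun i => if i == j then u0 i / P else u0 i); split.
  - move=> i; case: eqP => _ //; rewrite cnorm2M cnorm2V u0_unit cnorm2_prod.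
    by rewrite big1 ?invr1 ?mulr1 // => l _.
  - have PE : P = u0 j * \prod_(i | i != j) u0 i by rewrite /P (bigD1 j).
    rewrite (bigD1 j) //= eqxx (eq_bigr u0) => [|i /negbTE -> //].
    by rewrite mulrAC -PE divff.
  - by move=> i; case: eqP => [->|_]; rewrite ?zj0 ?mulr0 ?z'E ?zj0 ?mulr0.
exists u0; split=> //.
rewrite (eq_bigr (fun i => z' i / z i)) => [|i _]; last by rewrite /u0 nz.
by rewrite prodf_div -Ez divff //; apply/prodf_neq0 => i _; rewrite nz.
Qed.

Variable k : nat.
Implicit Type r : 'I_k.-1 -> R[i].

Lemma rext_neq0 r j : InTorus r -> rext r j != 0.
Proof.
move=> r1; rewrite /rext; case: ifP => _; last exact: oner_neq0.
by case: insubP => [l _ _|_]; [exact: cnorm2_neq0 (r1 l)|exact: oner_neq0].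
Qed.

Lemma rextk r : (0 < k)%N -> rext r k = 1.
Proof. by move=> k0; rewrite /rext k0 insubN // ltnn. Qed.

Lemma prod_rext_ratio r : (0 < k)%N -> InTorus r ->
  \prod_(i < k) (rext r i / rext r i.+1) = 1.
Proof.
move=> k0 r1; rewrite -(big_mkord xpredT (fun i => rext r i / rext r i.+1)).
rewrite telescope_prodr // => [|i _]; last by rewrite unitfE rext_neq0.
by rewrite rextk // divr1.
Qed.

(* [r_s] is the partial product [u_0^-1 ... u_s^-1]; [prod u = 1] makes [r_k = 1]. *)
Lemma torus_of_unimodular (u : 'I_k -> R[i]) : (0 < k)%N ->
  (forall i, cnorm2 (u i) = 1) -> \prod_i u i = 1 ->
  exists2 r : 'I_k.-1 -> R[i], InTorus r & forall i : 'I_k, u i = rext r i / rext r i.+1.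
Proof.
move=> k0 u1 Pu; pose r (s : 'I_k.-1) := \prod_(l < k | (l <= s)%N) (u l)^-1.
have rE j : (j <= k)%N -> rext r j = \prod_(l < k | (l < j)%N) (u l)^-1.
  move=> jk; rewrite /rext; case: (posnP j) => [->|j0] /=.
    by rewrite big_pred0 // => l; rewrite ltn0.
  case: insubP => [s _ sE|jk'].
    by apply: eq_bigl => l; rewrite sE; lia.
  have -> : j = k by move: jk' jk j0; lia.
  by rewrite (eq_bigl xpredT) ?prodfV ?Pu ?invr1 // => l; exact: ltn_ord.
exists r => [s|i].
  by rewrite cnorm2_prod big1 // => l _; rewrite cnorm2V u1 invr1.
have ui0 : u i != 0 by apply: cnorm2_neq0.
rewrite !rE ?(ltn_ord i) ?(ltnW (ltn_ord i)) // [X in _ / X](bigD1 i) //=.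
have -> : \prod_(l < k | (l < i.+1)%N && (l != i)) (u l)^-1 = \prod_(l < k | (l < i)%N) (u l)^-1.
  by apply: eq_bigl => l; rewrite -val_eqE /=; lia.
rewrite invfM invrK mulrCA divff ?mulr1 //.
by apply/prodf_neq0 => l _; rewrite invr_eq0 cnorm2_neq0.
Qed.

Lemma orbit_of_eq_cnorm2_prod (z z' : 'I_k -> R[i]) : (0 < k)%N ->
  (forall i, cnorm2 (z i) = cnorm2 (z' i)) -> \prod_i z i = \prod_i z' i ->
  exists2 r : 'I_k.-1 -> R[i], InTorus r & z' = (fun i : 'I_k => rext r i * z i * (rext r i.+1)^-1).
Proof.
move=> k0 zz' Ez; have [u [u1 Pu z'E]] := unimodular_ratio zz' Ez.
have [r r1 uE] := torus_of_unimodular k0 u1 Pu.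
by exists r => //; apply: funext => i; rewrite z'E uE mulrAC.
Qed.

End TorusOrbits.

Section Fibres.
Variables (R : realType) (k : nat) (m : 'I_k -> nat).

Lemma proj_raw_act r (p : Pt R m) : (0 < k)%N -> InTorus r ->
  proj_raw (act r p) = proj_raw p.
Proof.
move=> k0 r1; rewrite /proj_raw /act /=; congr (_, _).
under eq_bigr do rewrite mulrAC [_ * p.2 _]mulrC.
by rewrite big_split /= prod_rext_ratio // mulr1.
Qed.

Lemma proj_eq_iff_orbit (p p' : Pt R m) : (0 < k)%N -> InDom p -> InDom p' ->
  proj p = proj p' <-> exists2 r, InTorus r & p' = act r p.
Proof.
move=> k0 hp hp'; split => [E|[r r1 ->]]; last by rewrite !projE /proj_norm proj_raw_act.
move: (proj_eq_raw hp hp' E); rewrite /proj_raw => -[E1 E2].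
have zz' i : cnorm2 (p.2 i) = cnorm2 (p'.2 i).
  by rewrite !InDom_cnorm2 // E1.
have [r r1 z'E] := orbit_of_eq_cnorm2_prod k0 zz' E2.
by exists r => //; rewrite /act -z'E E1 -surjective_pairing.
Qed.

End Fibres.

Section Surjectivity.
Variable R : realType.

(* Root in [(0, 1/max b]] of [u W - prod (1 - u b_i)], by the intermediate value theorem. *)
Lemma exists_scale_root (I : finType) (i0 : I) (b : I -> R) (W : R) :
  (forall i, 0 <= b i) -> 0 <= W -> \sum_i b i + W = 1 ->
  exists u, [/\ 0 < u, forall i, u * b i <= 1 & \prod_i (1 - u * b i) = u * W].
Proof.
move=> b0 W0 bW1; have [j _ bmax] := @arg_maxP _ _ I i0 xpredT b isT.
have [bj0|bj0] := lerP (b j) 0.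
  have b_eq0 i : b i = 0 by apply/le_anti; rewrite b0 (le_trans (bmax i _)).
  exists 1; split=> [|i|]; rewrite ?ltr01 ?b_eq0 ?mulr0 ?ler01 //.
  have W1 : W = 1 by rewrite -bW1 big1 ?add0r // => i _; apply: b_eq0.
  by rewrite W1 mulr1 big1 // => i _; rewrite b_eq0 mulr0 subr0.
pose P : {poly R} := W *: 'X - \prod_i (1 - b i *: 'X).
have PE x : P.[x] = W * x - \prod_i (1 - b i * x).
  rewrite /P hornerD hornerN hornerZ hornerX horner_prod; congr (_ - _).
  by apply: eq_bigr => i _; rewrite hornerD hornerN hornerC hornerZ hornerX.
have prod_at0 : \prod_i (1 - b i * 0) = 1 :> R.
  by rewrite big1 // => i _; rewrite mulr0 subr0.
have bj_inv0 : 0 <= (b j)^-1 by rewrite invr_ge0 ltW.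
have sign : P.[0] <= 0 <= P.[(b j)^-1].
  rewrite !PE mulr0 add0r prod_at0 lerN10 subr_ge0 (bigD1 j) //= mulfV ?gt_eqF //.
  by rewrite subrr mul0r mulr_ge0.
have [x /andP[x0 xb] /rootP Px] := poly_ivt bj_inv0 sign.
have xn0 : x != 0.
  by apply/eqP => x_eq0; move/eqP: Px; rewrite x_eq0 PE mulr0 add0r prod_at0 oppr_eq0 oner_eq0.
exists x; split.
- by rewrite lt_neqAle eq_sym xn0.
- move=> i; apply: le_trans (_ : (b j)^-1 * b j <= 1); last by rewrite mulVf ?gt_eqF.
  by apply: ler_pM => //; apply: bmax.
- move/eqP: Px; rewrite PE subr_eq0 [RHS]mulrC => /eqP ->.
  by apply: eq_bigr => i _; rewrite mulrC.
Qed.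

Lemma complex_factors_of_cnorm2 (I : finType) (i0 : I) (c : I -> R) (w : R[i]) :
  (forall i, 0 <= c i) -> \prod_i c i = cnorm2 w ->
  exists z : I -> R[i], (forall i, cnorm2 (z i) = c i) /\ \prod_i z i = w.
Proof.
move=> c0 cw; pose rho i := Num.sqrt (c i).
have rho2 i : rho i ^+ 2 = c i by rewrite sqr_sqrtr.
pose P := \prod_(i | i != i0) rho i.
have P2 : P ^+ 2 = \prod_(i | i != i0) c i.
  by rewrite -prodrXl; apply: eq_bigr => i _; apply: rho2.
have prodE (z : I -> R[i]) : (forall i, i != i0 -> z i = (rho i)%:C) ->
    \prod_i z i = z i0 * P%:C.
  by move=> zE; rewrite (bigD1 i0) //= rmorph_prod; congr (_ * _); apply: eq_bigr.
have [P0|Pn0] := eqVneq P 0.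
  exists (fun i => (rho i)%:C); split=> [i|]; first by rewrite cnorm2_real rho2.
  rewrite prodE // P0 rmorph0 mulr0; apply/esym/eqP; rewrite -cnorm2_eq0 -cw (bigD1 i0) //=.
  by rewrite -P2 P0 expr0n mulr0.
exists (fun i => if i == i0 then w / P%:C else (rho i)%:C); split.
  move=> i; case: eqP => [->|_]; last by rewrite cnorm2_real rho2.
  rewrite cnorm2M cnorm2V cnorm2_real P2 -cw (bigD1 i0) //= mulfK //.
  by rewrite -P2 expf_neq0.
rewrite prodE => [|i /negbTE -> //]; rewrite eqxx divfK //.
by rewrite eq_complex /= negb_and Pn0.
Qed.

End Surjectivity.

Section ProjectionOnto.
Variables (R : realType) (k : nat) (m : 'I_k -> nat).

Lemma tscaleKV (a : R) (q : Tgt R m) : a != 0 -> tscale a^-1 (tscale a q) = q.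
Proof.
move=> a0; rewrite /tscale /= -mulrA -rmorphM /= mulfV // mulr1.
rewrite [RHS]surjective_pairing; congr (_, _).
by apply: functional_extensionality_dep => i; rewrite scalerA mulVf // scale1r.
Qed.

(* Scale [q] by [t = sqrt u] for the [u] of [exists_scale_root], then split the last
   coordinate [t q_z] into [k] complex factors of the right moduli. *)
Lemma proj_surj (q : Tgt R m) : (0 < k)%N -> InSm q ->
  exists2 p : Pt R m, InDom p & proj p = q.
Proof.
move=> k0 q1; pose i0 : 'I_k := Ordinal k0.
have [u [u0 ub1 uprod]] := exists_scale_root i0 (fun i => vnorm2_ge0 (q.1 i)) (cnorm2_ge0 q.2) q1.
pose t := Num.sqrt u; have t0 : 0 < t by rewrite sqrtr_gt0.
have t2 : t ^+ 2 = u by rewrite sqr_sqrtr // ltW.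
have [z [z2 zprod]] : exists z : 'I_k -> R[i],
    (forall i, cnorm2 (z i) = 1 - u * vnorm2 (q.1 i)) /\ \prod_i z i = q.2 * t%:C.
  apply: (complex_factors_of_cnorm2 (c := fun i => 1 - u * vnorm2 (q.1 i)) i0) => [i|].
    by rewrite subr_ge0.
  by rewrite uprod cnorm2MC t2.
exists (fun i => t *: q.1 i, z) => [i|]; first by rewrite /= z2 vnorm2Z t2 addrC subrK.
have raw : proj_raw (fun i => t *: q.1 i, z) = tscale t q by rewrite /proj_raw zprod.
have q1' : tnorm2 q = 1 := q1.
rewrite projE /proj_norm raw tnorm2Z q1' mulr1 sqrtr_sqr ger0_norm ?ltW //.
by rewrite tscaleKV ?gt_eqF.
Qed.

End ProjectionOnto.

Section Compactness.
Local Open Scope classical_set_scope.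
Variables (R : realType) (k : nat) (m : 'I_k -> nat).

(* A point of [Pt R m] has the real coordinates [x_i j] and [Re z_i], [Im z_i]; this identifies
   [Pt R m] with [coord -> R], whose product topology makes Tychonoff's theorem available. *)
Definition coord := ({i : 'I_k & 'I_(m i - 1)} + ('I_k * bool))%type.
Definition xcoord i (j : 'I_(m i - 1)) : coord := inl (Tagged (fun i => 'I_(m i - 1)) j).
Arguments xcoord : clear implicits.

Definition pt_of_coords (f : coord -> R) : Pt R m :=
  (fun i => \row_j f (xcoord i j), fun i => f (inr (i, true)) +i* f (inr (i, false))).
Definition coords_of_pt (p : Pt R m) (c : coord) : R :=
  match c with
  | inl s => p.1 (tag s) 0 (tagged s)
  | inr (i, b) => if b then complex.Re (p.2 i) else complex.Im (p.2 i)
  end.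

Lemma coords_of_ptK : cancel coords_of_pt pt_of_coords.
Proof.
move=> p; rewrite [RHS]surjective_pairing /pt_of_coords; congr (_, _).
  apply: functional_extensionality_dep => i; apply/matrixP => a j.
  by rewrite (ord1 a) mxE.
by apply: functional_extensionality_dep => i /=; case: (p.2 i).
Qed.

Definition sphere_lhs i (f : coord -> R) : R :=
  \sum_j f (xcoord i j) ^+ 2 + (f (inr (i, true)) ^+ 2 + f (inr (i, false)) ^+ 2).

Lemma sphere_lhsE i f :
  sphere_lhs i f = vnorm2 ((pt_of_coords f).1 i) + cnorm2 ((pt_of_coords f).2 i).
Proof. by congr (_ + _); apply: eq_bigr => j _; rewrite mxE. Qed.

Lemma sqr_coord_continuous (c : coord) : continuous (fun f : coord -> R => f c ^+ 2).
Proof.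
have -> : (fun f : coord -> R => f c ^+ 2) = fun f => f c * f c.
  by apply: funext => f; rewrite expr2.
by move=> f; apply: continuousM; apply: (@proj_continuous coord (fun=> R) c).
Qed.

Lemma sphere_lhs_continuous i : continuous (sphere_lhs i).
Proof.
pose X (f : coord -> R) := \sum_(j < m i - 1) f (xcoord i j) ^+ 2.
pose Zre (f : coord -> R) := f (inr (i, true)) ^+ 2.
pose Zim (f : coord -> R) := f (inr (i, false)) ^+ 2.
have X_cont : continuous X.
  apply: (@continuous_big _ _ +%R 0 xpredT add_continuous) => j _.
  exact: sqr_coord_continuous.
have Z_cont : continuous (fun f => Zre f + Zim f).
  by move=> f; apply: (@continuousD R R^o _ Zre Zim f); apply: sqr_coord_continuous.
by move=> f; apply: (@continuousD R R^o _ X _ f); [apply: X_cont|apply: Z_cont].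
Qed.

Lemma sqr_coord_le_sphere_lhs f c : exists i, f c ^+ 2 <= sphere_lhs i f.
Proof.
have sq0 (c' : coord) : 0 <= f c' ^+ 2 by apply: sqr_ge0.
have S0 i : 0 <= \sum_(j < m i - 1) f (xcoord i j) ^+ 2 by rewrite sumr_ge0.
case: c => [[i j]|[i b]]; exists i; rewrite /sphere_lhs.
  rewrite (bigD1 j) //= -addrA lerDl addr_ge0 ?addr_ge0 //.
  by rewrite sumr_ge0.
by have := sq0 (inr (i, true)); have := sq0 (inr (i, false)); have := S0 i; case: b; lra.
Qed.

Definition dom_coords : set (coord -> R) := [set f | InDom (pt_of_coords f)].

Lemma dom_coords_compact : compact dom_coords.
Proof.
have closed_dom : closed dom_coords.
  have -> : dom_coords = \bigcap_(i in setT) (sphere_lhs i @^-1` [set 1]).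
    apply/seteqP; split=> f /= hf i; first by move=> _; rewrite /= sphere_lhsE; apply: hf.
    by rewrite -sphere_lhsE; apply: hf.
  apply: closed_bigI => i _; apply: preimage_closed; last exact: closed_eq.
  by move=> f _; apply: sphere_lhs_continuous.
apply: (subclosed_compact closed_dom
  (tychonoff (fun _ : coord => @segment_compact R (-1) 1))).
move=> f hf c; have [i fci] := sqr_coord_le_sphere_lhs f c.
have : f c ^+ 2 <= 1 by rewrite -(hf i) -sphere_lhsE.
by rewrite /= in_itv /=; nra.
Qed.

Definition coord_dist_bound : R := \sum_(i < k) ((m i - 1)%:R + 2).

Lemma distP_pt_of_coords_le (f g : coord -> R) d : (forall c, `|f c - g c| < d) ->
  distP (pt_of_coords f) (pt_of_coords g) <= coord_dist_bound * d ^+ 2.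
Proof.
move=> fg; have sq c : (f c - g c) ^+ 2 <= d ^+ 2.
  by have := fg c; rewrite ltr_norml => /andP[? ?]; nra.
rewrite /distP mulr_suml; apply: ler_sum => i _; rewrite mulrDl; apply: lerD.
  apply: le_trans (_ : \sum_(j < m i - 1) d ^+ 2 <= _).
    by apply: ler_sum => j _; rewrite !mxE; apply: sq.
  by rewrite sumr_const card_ord mulr_natl.
by rewrite /cnorm2 /=; have := sq (inr (i, true)); have := sq (inr (i, false)); lra.
Qed.

Lemma InDom_seq_cluster (pn : nat -> Pt R m) : (forall n, InDom (pn n)) ->
  exists2 ps, InDom ps &
    forall d, 0 < d -> forall N, exists2 n, (N <= n)%N & distP ps (pn n) < d.
Proof.
move=> pn1; have Fdom : ((fun n => coords_of_pt (pn n)) @ \oo) dom_coords.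
  by exists 0%N => // n _; rewrite /dom_coords /= coords_of_ptK.
have [f [domf clf]] := dom_coords_compact _ Fdom.
exists (pt_of_coords f) => // d d0 N.
have M0 : 0 < coord_dist_bound + 1.
  by rewrite ltr_wpDl // sumr_ge0 // => i _; rewrite addr_ge0.
pose del := Num.sqrt (d / (coord_dist_bound + 1)).
have del0 : 0 < del by rewrite sqrtr_gt0 divr_gt0.
have near_f : nbhs f [set g : coord -> R | forall c, `|f c - g c| < del].
  apply: (@filter_forall _ coord (fun c (g : coord -> R) => `|f c - g c| < del) (nbhs f) _)
    => c.
  exact: @proj_continuous coord (fun=> R) c f _ (nbhsx_ballx (f c) del del0).
have tail : ((fun n => coords_of_pt (pn n)) @ \oo)
    [set g | exists2 n, (N <= n)%N & g = coords_of_pt (pn n)].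
  by exists N => // n /= Nn; exists n.
have [_ [[n Nn ->] fn]] := clf _ _ tail near_f.
exists n => //; rewrite -[pn n]coords_of_ptK.
apply: le_lt_trans (distP_pt_of_coords_le fn) _.
by rewrite sqr_sqrtr ?divr_ge0 ?ltW // mulrA ltr_pdivrMr // mulrDr mulr1 mulrC ltrDl.
Qed.

End Compactness.

Section QuotientTopology.
Variables (R : realType) (k : nat) (m : 'I_k -> nat).
Implicit Types (p : Pt R m) (q : Tgt R m).

Lemma distT_proj_lt p p' (e : R) : InDom p -> InDom p' ->
  distP p p' < e / 2 ^+ k -> distT (proj p) (proj p') < e.
Proof.
move=> hp hp' pp'; apply: le_lt_trans (distT_proj_le hp hp') _.
by rewrite mulrC -ltr_pdivlMr ?exprn_gt0.
Qed.

Lemma proj_continuous : rel_continuous (@distP R k m) (@distT R k m) (@InDom R k m) (@proj R k m).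
Proof.
move=> p hp e e0; exists (e / 2 ^+ k) => [|p' hp']; first by rewrite divr_gt0 ?exprn_gt0.
exact: distT_proj_lt.
Qed.

Lemma rel_open_preimage_proj (U : Tgt R m -> Prop) :
  rel_open (@distT R k m) (@InSm R k m) U ->
  rel_open (@distP R k m) (@InDom R k m) (fun p => U (proj p)).
Proof.
move=> Uopen p hp Up; have [e e0 eU] := Uopen _ (proj_InSm hp) Up.
exists (e / 2 ^+ k) => [|p' hp' pp']; first by rewrite divr_gt0 ?exprn_gt0.
by apply: eU; [apply: proj_InSm|apply: distT_proj_lt].
Qed.

Lemma proj_eq_of_cluster q (pn : nat -> Pt R m) ps : InDom ps -> (forall n, InDom (pn n)) ->
  (forall n, distT q (proj (pn n)) < n.+1%:R^-1) ->
  (forall d, 0 < d -> forall N, exists2 n, (N <= n)%N & distP ps (pn n) < d) ->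
  proj ps = q.
Proof.
move=> hps hpn qpn ps_cl; apply/esym/distT_eq0/eqP; rewrite eq_le distT_ge0 andbT.
apply/ler_addgt0Pr => e e0; rewrite add0r.
pose N := Num.bound (4 / e).
have N_gt : 4 / e < N%:R by rewrite archi_boundP // ltW // divr_gt0.
have e4 : 0 < e / 4 / 2 ^+ k by rewrite !divr_gt0 ?exprn_gt0.
have [n Nn psn] := ps_cl _ e4 N.
have dn : distT (proj (pn n)) (proj ps) < e / 4.
  by rewrite distT_sym; apply: distT_proj_lt.
have qn : distT q (proj (pn n)) < e / 4.
  apply: lt_trans (qpn n) _; rewrite -[e / 4]invf_div ltf_pV2 ?posrE ?divr_gt0 //.
  by apply: lt_le_trans N_gt _; rewrite ler_nat ltnW.
by have := distT_le q (proj (pn n)) (proj ps); lra.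
Qed.

(* Sequences [p_n] with [proj p_n -> q] outside [U] have a cluster point [p], with [proj p = q],
   and [U (proj p)] would put some [proj p_n] in [U]. *)
Lemma rel_open_of_preimage_proj (U : Tgt R m -> Prop) : (0 < k)%N ->
  rel_open (@distP R k m) (@InDom R k m) (fun p => U (proj p)) ->
  rel_open (@distT R k m) (@InSm R k m) U.
Proof.
move=> k0 Uopen q hq Uq; apply: contrapT => notU.
have pn_ex n : exists p, [/\ InDom p, distT q (proj p) < n.+1%:R^-1 & ~ U (proj p)].
  apply: contrapT => nopn; apply: notU; exists n.+1%:R^-1 => // q' hq' qq'.
  apply: contrapT => nUq'; have [p hp pq'] := proj_surj k0 hq'.
  by apply: nopn; exists p; rewrite pq'.
have [pn pnP] := choice pn_ex.
have hpn n : InDom (pn n) by case: (pnP n).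
have [ps hps ps_cl] := InDom_seq_cluster hpn.
have psq : proj ps = q.
  by apply: proj_eq_of_cluster ps_cl => // n; case: (pnP n).
have [d d0 dU] : exists2 d : R, 0 < d & forall p, InDom p -> distP ps p < d -> U (proj p).
  by apply: Uopen; rewrite ?psq.
have [n _ psn] := ps_cl d d0 0%N.
by case: (pnP n) => _ _; apply; apply: dU.
Qed.

End QuotientTopology.

Theorem theorem2 (R : realType) (k : nat) (m : 'I_k -> nat) :
  (2 <= k)%N -> (forall i, 2 <= m i)%N ->
  [/\ forall p : Pt R m, InDom p -> InSm (proj p),
      forall q : Tgt R m, InSm q -> exists2 p : Pt R m, InDom p & proj p = q,
      forall p p' : Pt R m, InDom p -> InDom p' ->
        (proj p = proj p' <-> exists2 r, InTorus r & p' = act r p),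
      rel_continuous (@distP R k m) (@distT R k m) (@InDom R k m) (@proj R k m)
    & forall U : Tgt R m -> Prop,
        rel_open (@distT R k m) (@InSm R k m) U <->
        rel_open (@distP R k m) (@InDom R k m) (fun p => U (proj p))].
Proof.
move=> k2 _; have k0 : (0 < k)%N by apply: leq_trans k2.
split.
- exact: proj_InSm.
- by move=> q; apply: proj_surj.
- by move=> p p'; apply: proj_eq_iff_orbit.
- exact: proj_continuous.
- by move=> U; split; [apply: rel_open_preimage_proj|apply: rel_open_of_preimage_proj].
Qed.
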